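(* The family of logics $\mathrm{FO}$ is $\mathbb{T}^\times$-compositional and also $\mathbb{T}$-compositional.
   Context: Sorts are $\Xi=\omega$ (arities). For an $\omega$-sorted family of partial orders $A$ and $n<\omega$, $\mathbb{T}^\times_nA$ is the set of finite or infinite trees with ordered successors labelled by elements of $A$ or variables $x_0,\dots,x_{n-1}$ (arity $0$), where a vertex with label in $A_k$ has exactly $k$ successors, variables label leaves only, and the root is labelled by an element of $A$; ordered by same shape and vertexwise comparison of labels. $\mathbb{T}A\subseteq\mathbb{T}^\times A$ consists of the trees using each variable at most once. $\mathbb{T}^\times$ is a monad with $\mathrm{sing}(a)=a(x_0,\dots,x_{n-1})$ and $\mathrm{flat}$ given by substituting, for each vertex $v$ of a tree of trees, the tree $T(v)$ with its $x_i$-leaves linked to the root of the tree at the $(i+1)$-st successor of $v$ and unravelling; $\mathbb{T}$ is a submonad. For an alphabet (finite unordered set) $\Sigma$, a tree $t$ of sort $n$ is identified with the structure $\langle\mathrm{dom}(t),\preceq,(S_i)_{i<\omega},(P_c)_{c\in\Sigma},(Q_i)_{i<n},R\rangle$ (tree order, successor relations, label predicates, variable predicates, root). FO is the family of logics assigning to $\Sigma$ the first-order sentences over this signature, a sentence of sort $n$ being evaluated on trees of sort $n$. For a monad $\mathbb{M}\in\{\mathbb{T},\mathbb{T}^\times\}$ and a set $\Delta$ of formulae, $s\sqsubseteq_\Delta t$ iff every formula in $\Delta$ satisfied by $s$ is satisfied by $t$. A preorder $\sqsubseteq$ on $\mathbb{M}\Sigma$ is a congruence ordering if $\mathbb{M}q(S)\leq\mathbb{M}q(T)$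 implies $\mathrm{flat}(S)\sqsubseteq\mathrm{flat}(T)$ for $S,T\in\mathbb{M}\mathbb{M}\Sigma$, $q$ the quotient map onto the ordered set of classes. A family of logics $L$ is $\mathbb{M}$-compositional if for every finite subfamily $\Phi$ (finitely many formulae per alphabet) there is $\Delta$ with $\Phi\subseteq\Delta\subseteq L$, finite in each sort for each alphabet up to equivalence, such that $\sqsubseteq_{\Delta[\Sigma]}$ is a congruence ordering on $\mathbb{M}\Sigma$ for every alphabet $\Sigma$. *)

From mathcomp Require Import all_boot.
From Stdlib Require List.
Set Implicit Arguments. Unset Strict Implicit. Unset Printing Implicit Defensive.

Record alphabet := Alphabet { letter :> finType; arity : letter -> nat }.

(* Raw labelled trees: a vertex is an address (seq nat, the i-th successor
   of w is rcons w i); a label is a letter (inl) or a variable x_i (inr i);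
   None = not a vertex. *)
Definition rtree (L : Type) := seq nat -> option (L + nat).

Definition wf_tree (L : Type) (ar : L -> nat) (n : nat) (t : rtree L) : Prop :=
  (exists a, t [::] = Some (inl a)) /\
  forall w, match t w with
            | Some (inl a) => forall i, t (rcons w i) <> None <-> i < ar a
            | Some (inr j) => j < n /\ forall i, t (rcons w i) = None
            | None => forall i, t (rcons w i) = None
            end.

(* Linear trees (monad T): each variable is used at most once. *)
Definition linear (L : Type) (t : rtree L) : Prop :=
  forall i v w, t v = Some (inr i) -> t w = Some (inr i) -> v = w.

(* t in M Sigma of sort n; lin = true for M = T, lin = false for M = T^x. *)
Definition inM (lin : bool) (S : alphabet) (n : nat) (t : rtree S) : Prop :=
  wf_tree (@arity S) n t /\ (lin -> linear t).

(* Trees of trees: a label of sort k is a pair (k, s) with s a tree of sort k. *)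
Definition rtree2 (S : alphabet) := rtree (nat * rtree S).

Definition inMM (lin : bool) (S : alphabet) (m : nat) (T : rtree2 S) : Prop :=
  wf_tree fst m T /\ (lin -> linear T) /\
  forall w k s, T w = Some (inl (k, s)) -> inM lin k s.

Inductive fstate := FNode of seq nat & seq nat | FVarS of nat.

(* position p in the inner tree at outer vertex u; a variable x_i is replaced
   by the root of the tree at the i-th successor of u (or by the variable of
   the outer tree labelling that successor). *)
Definition resolve (S : alphabet) (T : rtree2 S) (u p : seq nat) : option fstate :=
  match T u with
  | Some (inl (_, s)) =>
      match s p with
      | Some (inl _) => Some (FNode u p)
      | Some (inr i) =>
          match T (rcons u i) with
          | Some (inl _) => Some (FNode (rcons u i) [::])
          | Some (inr j) => Some (FVarS j)
          | None => None
          end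
      | None => None
      end
  | _ => None
  end.

Definition flat_state (S : alphabet) (T : rtree2 S) (w : seq nat) : option fstate :=
  foldl (fun st c => match st with
                     | Some (FNode u p) => resolve T u (rcons p c)
                     | _ => None
                     end) (resolve T [::] [::]) w.

Definition flat (S : alphabet) (T : rtree2 S) : rtree S := fun w =>
  match flat_state T w with
  | Some (FNode u p) =>
      match T u with
      | Some (inl (_, s)) =>
          match s p with Some (inl a) => Some (inl a) | _ => None end
      | _ => None
      end
  | Some (FVarS j) => Some (inr j)
  | None => None
  end.

(* Signature: tree order (prefix order, root minimal), successor relations
   S_i (i < omega), label predicates P_c (c in Sigma), variable predicates
   Q_i, root predicate R, and equality. *)
Inductive fo (S : Type) :=
| FLe of nat & nat
| FSucc of nat & nat & nat    (* FSucc i x y : y is the i-th successor of x *)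
| FLab of S & nat
| FQ of nat & nat
| FRoot of nat
| FEq of nat & nat
| FNot of fo S
| FAnd of fo S & fo S
| FEx of nat & fo S.

Fixpoint fo_fv (S : Type) (f : fo S) : seq nat :=
  match f with
  | FLe x y | FSucc _ x y | FEq x y => [:: x; y]
  | FLab _ x | FQ _ x | FRoot x => [:: x]
  | FNot g => fo_fv g
  | FAnd g h => fo_fv g ++ fo_fv h
  | FEx x g => filter (fun z => z != x) (fo_fv g)
  end.

Fixpoint fo_sort_ok (S : Type) (n : nat) (f : fo S) : bool :=
  match f with
  | FQ i _ => i < n
  | FNot g | FEx _ g => fo_sort_ok n g
  | FAnd g h => fo_sort_ok n g && fo_sort_ok n h
  | _ => true
  end.

Definition FO (S : alphabet) (n : nat) (f : fo S) : Prop :=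
  fo_fv f = [::] /\ fo_sort_ok n f.

Fixpoint sat (S : alphabet) (t : rtree S) (nu : nat -> seq nat) (f : fo S) : Prop :=
  match f with
  | FLe x y => prefix (nu x) (nu y)
  | FSucc i x y => nu y = rcons (nu x) i
  | FLab c x => t (nu x) = Some (inl c)
  | FQ i x => t (nu x) = Some (inr i)
  | FRoot x => nu x = [::]
  | FEq x y => nu x = nu y
  | FNot g => ~ sat t nu g
  | FAnd g h => sat t nu g /\ sat t nu h
  | FEx x g => exists v, t v <> None /\
                 sat t (fun z => if z == x then v else nu z) g
  end.

(* truth of a sentence (the assignment is irrelevant for sentences) *)
Definition holds (S : alphabet) (t : rtree S) (f : fo S) : Prop :=
  sat t (fun _ => [::]) f.

Definition sqle (S : alphabet) (D : fo S -> Prop) (s t : rtree S) : Prop :=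
  forall f, D f -> holds s f -> holds t f.

(* M q (T1) <= M q (T2), q the sortwise quotient of (M Sigma, [=_D) onto its
   ordered set of classes: same shape, equal variables, and at each letter
   vertex the two labels have the same sort k and their classes compare. *)
Definition lift_le (S : alphabet) (D : nat -> fo S -> Prop) (T1 T2 : rtree2 S) : Prop :=
  forall w, match T1 w, T2 w with
            | None, None => True
            | Some (inr i), Some (inr j) => i = j
            | Some (inl (k, s)), Some (inl (k', s')) => k = k' /\ sqle (D k) s s'
            | _, _ => False
            end.

Definition congruence_ordering (lin : bool) (S : alphabet) (D : nat -> fo S -> Prop) : Prop :=
  forall m (T1 T2 : rtree2 S), inMM lin m T1 -> inMM lin m T2 ->
    lift_le D T1 T2 -> sqle (D m) (flat T1) (flat T2).

Definition fo_equiv (lin : bool) (S : alphabet) (n : nat) (f g : fo S) : Prop :=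
  forall t, inM lin n t -> (holds t f <-> holds t g).

Definition FO_compositional (lin : bool) : Prop :=
  forall Phi : forall S : alphabet, nat -> fo S -> Prop,
    (forall S : alphabet, exists l : seq (nat * fo S),
        forall n f, Phi S n f -> List.In (n, f) l) ->
    (forall (S : alphabet) n f, Phi S n f -> FO n f) ->
    exists Delta : forall S : alphabet, nat -> fo S -> Prop,
      [/\ (forall (S : alphabet) n f, Phi S n f -> Delta S n f),
          (forall (S : alphabet) n f, Delta S n f -> FO n f),
          (forall (S : alphabet) n, exists l : seq (fo S),
              forall f, Delta S n f -> exists2 g, List.In g l & fo_equiv lin n f g)
        & (forall S : alphabet, congruence_ordering lin (Delta S))].

(* For Delta take the sentences of quantifier rank at most Q that use only
   variables below V and successor relations S_i with i < B, where Q, V and B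
   exceed the corresponding bounds of Phi.  Up to equivalence there are
   finitely many of them, since each is equivalent to the disjunction of the
   Hintikka sentences of the finitely many rank-Q types of its models.  These
   Hintikka sentences belong to Delta, so s [=_Delta s' forces s and s' to
   have the same rank-Q type: Duplicator wins the Q-round
   Ehrenfeucht-Fraisse game on them.  Congruence is then a composition
   theorem for games: in the game on the flattenings, Duplicator answers a
   move by walking down the inner trees its address passes through, using in
   each of them the local game between the corresponding labels. *)

From mathcomp Require Import all_boot.
From Stdlib Require Import Classical ClassicalEpsilon.
Set Implicit Arguments. Unset Strict Implicit. Unset Printing Implicit Defensive.

Definition upd (T : Type) (nu : nat -> T) x v := fun z => if z == x then v else nu z.
Definition add_var (b : nat -> bool) x := fun z => (z == x) || b z.

Lemma upd_same (T : Type) (nu : nat -> T) x v : upd nu x v x = v.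
Proof. by rewrite /upd eqxx. Qed.

Lemma upd_other (T : Type) (nu : nat -> T) x v y : y != x -> upd nu x v y = nu y.
Proof. by rewrite /upd => /negbTE ->. Qed.

(** * Ehrenfeucht-Fraisse games *)

Section EFGame.
Variable S : alphabet.
Variables V B : nat.

Fixpoint qrank (f : fo S) : nat :=
  match f with
  | FNot g => qrank g
  | FAnd g h => maxn (qrank g) (qrank h)
  | FEx _ g => (qrank g).+1
  | _ => 0
  end.

Fixpoint bounded (f : fo S) : bool :=
  match f with
  | FLe x y | FEq x y => (x < V) && (y < V)
  | FSucc i x y => [&& i < B, x < V & y < V]
  | FLab _ x | FQ _ x | FRoot x => x < V
  | FNot g => bounded g
  | FAnd g h => bounded g && bounded h
  | FEx x g => (x < V) && bounded g
  end.

Definition bounded_atom n (a : fo S) : bool :=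
  match a with
  | FLe x y | FEq x y => (x < V) && (y < V)
  | FSucc i x y => [&& i < B, x < V & y < V]
  | FLab _ x | FRoot x => x < V
  | FQ i x => (i < n) && (x < V)
  | _ => false
  end.

Definition atoms_agree n (b : nat -> bool) (t1 : rtree S) nu1 (t2 : rtree S) nu2 :=
  forall a, bounded_atom n a -> all b (fo_fv a) -> (sat t1 nu1 a <-> sat t2 nu2 a).

(* Duplicator wins the [r]-round Ehrenfeucht-Fraisse game on [(t1, nu1)] and
   [(t2, nu2)], the pebbles being the variables below [V]; [b] is the set of
   variables already placed. *)
Fixpoint ef_equiv n r (b : nat -> bool) (t1 : rtree S) nu1 (t2 : rtree S) nu2 : Prop :=
  atoms_agree n b t1 nu1 t2 nu2 /\
  match r with
  | 0 => True
  | r'.+1 => forall x, x < V ->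
     (forall v, t1 v <> None -> exists2 v', t2 v' <> None &
         ef_equiv n r' (add_var b x) t1 (upd nu1 x v) t2 (upd nu2 x v')) /\
     (forall v', t2 v' <> None -> exists2 v, t1 v <> None &
         ef_equiv n r' (add_var b x) t1 (upd nu1 x v) t2 (upd nu2 x v'))
  end.

Lemma sat_ext (t : rtree S) f : forall nu nu',
  (forall z, z \in fo_fv f -> nu z = nu' z) -> (sat t nu f <-> sat t nu' f).
Proof.
elim: f => /= [x y|i x y|c x|i x|x|x y|g IH|g IHg h IHh|x g IH] nu nu' e;
  try by rewrite !e ?inE ?eqxx ?orbT.
- by rewrite (IH nu nu').
- by rewrite (IHg nu nu') ?(IHh nu nu') // => z hz; apply: e; rewrite mem_cat hz ?orbT.
- have e' z : z \in fo_fv g -> upd nu x ^~ z =1 upd nu' x ^~ z.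
    move=> hz v; rewrite /upd; case: eqP => // /eqP zx.
    by apply: e; rewrite mem_filter zx.
  have hIH v : sat t (upd nu x v) g <-> sat t (upd nu' x v) g by apply: IH => z /e'.
  by split=> -[v [hv /hIH hs]]; exists v.
Qed.

Lemma atoms_agree_ext n b t1 nu1 t2 nu2 (b' : nat -> bool) nu1' nu2' :
  atoms_agree n b t1 nu1 t2 nu2 ->
  (forall z, b' z -> [/\ b z, nu1 z = nu1' z & nu2 z = nu2' z]) ->
  atoms_agree n b' t1 nu1' t2 nu2'.
Proof.
move=> hA e a ha /allP hb.
rewrite -(sat_ext t1 (nu := nu1)) -?(sat_ext t2 (nu := nu2)).
- by apply: hA => //; apply/allP => z /hb /e [].
- by move=> z /hb /e [].
- by move=> z /hb /e [].
Qed.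

Lemma ef_equiv_atoms n r b t1 nu1 t2 nu2 :
  ef_equiv n r b t1 nu1 t2 nu2 -> atoms_agree n b t1 nu1 t2 nu2.
Proof. by case: r => [|r] []. Qed.

Lemma ef_equiv_sub_ext n r : forall b t1 nu1 t2 nu2 (b' : nat -> bool) nu1' nu2',
  ef_equiv n r b t1 nu1 t2 nu2 ->
  (forall z, b' z -> [/\ b z, nu1 z = nu1' z & nu2 z = nu2' z]) ->
  ef_equiv n r b' t1 nu1' t2 nu2'.
Proof.
elim: r => [|r IH] b t1 nu1 t2 nu2 b' nu1' nu2' [hA hF] e.
  by split => //; apply: atoms_agree_ext hA e.
split; first exact: atoms_agree_ext hA e.
have e' x v v' z : add_var b' x z ->
    [/\ add_var b x z, upd nu1 x v z = upd nu1' x v z & upd nu2 x v' z = upd nu2' x v' z].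
  by rewrite /add_var /upd; case: eqP => //= _ /e.
move=> x hx; have [f1 f2] := hF x hx; split.
- move=> v hv; have [v' hv' he] := f1 v hv; exists v' => //; exact: IH he (e' x v v').
- move=> v' hv'; have [v hv he] := f2 v' hv'; exists v => //; exact: IH he (e' x v v').
Qed.

Lemma ef_equiv_ext n r b t1 nu1 t2 nu2 nu1' nu2' :
  ef_equiv n r b t1 nu1 t2 nu2 ->
  (forall z, b z -> nu1 z = nu1' z) -> (forall z, b z -> nu2 z = nu2' z) ->
  ef_equiv n r b t1 nu1' t2 nu2'.
Proof. by move=> h e1 e2; apply: ef_equiv_sub_ext h _ => z bz; rewrite bz e1 ?e2. Qed.

Lemma ef_equiv_sub n r b t1 nu1 t2 nu2 (b' : nat -> bool) :
  ef_equiv n r b t1 nu1 t2 nu2 -> (forall z, b' z -> b z) -> ef_equiv n r b' t1 nu1 t2 nu2.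
Proof. by move=> h sb; apply: ef_equiv_sub_ext h _ => z /sb. Qed.

Lemma ef_equiv_le n r r' b t1 nu1 t2 nu2 :
  r <= r' -> ef_equiv n r' b t1 nu1 t2 nu2 -> ef_equiv n r b t1 nu1 t2 nu2.
Proof.
elim: r r' b nu1 nu2 => [|r IH] [|r'] // b nu1 nu2 le [hA hF]; split => // x hx.
have [f1 f2] := hF x hx; split.
- by move=> v /f1 [v' hv' he]; exists v' => //; apply: IH he.
- by move=> v' /f2 [v hv he]; exists v => //; apply: IH he.
Qed.

Lemma ef_equiv_sym n r : forall b t1 nu1 t2 nu2,
  ef_equiv n r b t1 nu1 t2 nu2 -> ef_equiv n r b t2 nu2 t1 nu1.
Proof.
elim: r => [|r IH] b t1 nu1 t2 nu2 [hA hF].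
  by split=> // a ha hb; rewrite hA.
split=> [a ha hb|x hx]; first by rewrite hA.
have [f1 f2] := hF x hx; split.
- by move=> v /f2 [v' hv' he]; exists v' => //; apply: IH.
- by move=> v' /f1 [v hv he]; exists v => //; apply: IH.
Qed.

Lemma ef_equiv_sat n f : forall r b t1 nu1 t2 nu2,
  bounded f -> fo_sort_ok n f -> qrank f <= r -> all b (fo_fv f) ->
  ef_equiv n r b t1 nu1 t2 nu2 -> (sat t1 nu1 f <-> sat t2 nu2 f).
Proof.
elim: f => [x y|i x y|c x|i x|x|x y|g IH|g IHg h IHh|x g IH] r b t1 nu1 t2 nu2;
  try by move=> g so _ hb /ef_equiv_atoms hA; apply: hA => //=; move: g so => /= -> ->.
- by move=> hg so hq hb he /=; rewrite (IH r b t1 nu1 t2 nu2).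
- move=> /andP[gg gh] /andP[sg sh] /=; rewrite geq_max all_cat => /andP[qg qh] /andP[bg bh] he.
  by rewrite (IHg r b t1 nu1 t2 nu2) ?(IHh r b t1 nu1 t2 nu2).
- case: r => [//|r] /= /andP[hx gg] so hq hb [_ hF].
  have hb' : all (add_var b x) (fo_fv g).
    apply/allP => z hz; rewrite /add_var; case: eqP => //= /eqP zx.
    by apply: (allP hb); rewrite mem_filter zx.
  have [f1 f2] := hF x hx; split.
  + move=> [v [/f1 [v' hv' he] hs]]; exists v'; split => //.
    by apply/(IH r (add_var b x) t1 (upd nu1 x v) t2 (upd nu2 x v')).
  + move=> [v' [/f2 [v hv he] hs]]; exists v; split => //.
    by apply/(IH r (add_var b x) t1 (upd nu1 x v) t2 (upd nu2 x v')).
Qed.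

End EFGame.

(** * Rank types and Hintikka sentences *)

Definition classicb (P : Prop) : bool :=
  if excluded_middle_informative P then true else false.

Lemma classicbP P : reflect P (classicb P).
Proof. by rewrite /classicb; case: excluded_middle_informative => h; constructor. Qed.

Lemma InE (T : eqType) (x : T) s : List.In x s <-> x \in s.
Proof.
elim: s => [|y s IH] //=; rewrite inE; split.
- by case=> [->|/IH ->]; rewrite ?eqxx ?orbT.
- by case/orP=> [/eqP ->|/IH]; [left|right].
Qed.

Lemma In_map (T U : Type) (g : T -> U) s y :
  List.In y (map g s) <-> exists2 c, List.In c s & y = g c.
Proof.
elim: s => [|c s IH] /=; first by split => // -[].
rewrite IH; split.
- by move=> [<-|[c' hc ->]]; [exists c; first left | exists c'; first right].
- by move=> [c' [<-|hc] ->]; [left | right; exists c'].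
Qed.

Section Conjunctions.
Variable S : alphabet.

Definition ftrue : fo S := FNot (FEx 0 (FNot (FEq S 0 0))).

(* The conjunction of a nonempty list has no [ftrue] conjunct, so that its
   rank is the maximal rank of its members. *)
Definition fbigand (l : seq (fo S)) : fo S :=
  if l is a :: l' then foldl (@FAnd S) a l' else ftrue.
Arguments fbigand : simpl never.

Definition fbigor (l : seq (fo S)) : fo S := FNot (fbigand (map (@FNot S) l)).

(* [FEq x x] keeps the conjunction nonempty, see [fbigand]. *)
Definition fforall_or x (l : seq (fo S)) : fo S :=
  FNot (FEx x (fbigand (FEq S x x :: map (@FNot S) l))).

Definition fand_exists x (l : seq (fo S)) : fo S := fbigand (map (FEx x) l).

Definition fext_exactly x (l : seq (fo S)) : fo S := FAnd (fforall_or x l) (fand_exists x l).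

Lemma fbigand_ind (P : fo S -> Prop) l : (l = [::] -> P ftrue) ->
  (forall a b, P a -> P b -> P (FAnd a b)) -> (forall f, List.In f l -> P f) -> P (fbigand l).
Proof.
move=> htrue hand; case: l htrue => [|a l] htrue h; first exact: htrue.
rewrite /fbigand; clear htrue.
have : P a by apply: h; left.
have {}h : forall f, List.In f l -> P f by move=> f hf; apply: h; right.
elim: l a h => [|c l IH] a h ha //=.
apply: IH => [f hf|]; first by apply: h; right.
by apply: hand => //; apply: h; left.
Qed.

Lemma sat_fbigand t nu l : sat t nu (fbigand l) <-> forall f, List.In f l -> sat t nu f.
Proof.
case: l => [|a l] /=; first by split => // _ [v [_ h]]; exact: h.
elim: l a => [|c l IH] a /=.
  by split=> [h f [<-|[]]|h] //; apply: h; left.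
rewrite IH /=; split=> h f.
- have [ha hc] := h _ (or_introl erefl).
  by case=> [<-|[<-|hf]] //; apply: h; right.
- case=> [<-|hf]; last by apply: h; right; right.
  by split; apply: h; [left|right; left].
Qed.

Lemma sat_fbigand_map (T : eqType) (g : T -> fo S) s t nu :
  sat t nu (fbigand (map g s)) <-> forall c, c \in s -> sat t nu (g c).
Proof.
rewrite sat_fbigand; split.
- by move=> h c hc; apply: h; apply/In_map; exists c => //; apply/InE.
- by move=> h f /In_map [c /InE hc ->]; apply: h.
Qed.

Lemma sat_fbigor t nu l : sat t nu (fbigor l) <-> exists2 f, List.In f l & sat t nu f.
Proof.
rewrite /fbigor /= sat_fbigand; split.
- move=> h; apply: NNPP => hn; apply: h => g /In_map [f hf ->] /= hs.
  by apply: hn; exists f.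
- by move=> [f hf hs] h; apply: (h (FNot f)) => //; apply/In_map; exists f.
Qed.

Lemma sat_fforall_or t nu x l : sat t nu (fforall_or x l) <->
  forall v, t v <> None -> exists2 f, List.In f l & sat t (upd nu x v) f.
Proof.
rewrite /fforall_or /=; split.
- move=> h v hv; apply: NNPP => hn; apply: h; exists v; split => //.
  apply/sat_fbigand => f /= [<-|/In_map [g hg ->]] //= hs.
  by apply: hn; exists g.
- move=> h [v [/h [f hf hs] /sat_fbigand hl]].
  by apply: (hl (FNot f)) => //; right; apply/In_map; exists f.
Qed.

Lemma sat_fand_exists t nu x l : sat t nu (fand_exists x l) <->
  forall f, List.In f l -> exists v, t v <> None /\ sat t (upd nu x v) f.
Proof.
rewrite sat_fbigand; split.
- by move=> h f hf; apply: (h (FEx x f)); apply/In_map; exists f.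
- by move=> h g /In_map [f hf ->]; apply: h.
Qed.

Lemma sat_fext_exactly t nu x l : sat t nu (fext_exactly x l) <->
  (forall v, t v <> None -> exists2 f, List.In f l & sat t (upd nu x v) f) /\
  (forall f, List.In f l -> exists v, t v <> None /\ sat t (upd nu x v) f).
Proof. by rewrite -sat_fforall_or -sat_fand_exists. Qed.

Lemma qrank_fbigand l k : (l <> [::] \/ 0 < k) ->
  (forall f, List.In f l -> qrank f <= k) -> qrank (fbigand l) <= k.
Proof.
move=> hk h; apply: (@fbigand_ind (fun f => qrank f <= k)) => // [l0|f g hf hg].
- by case: hk => [/(_ l0)|].
- by rewrite /= geq_max hf.
Qed.

End Conjunctions.

Section RankTypes.
Variables (S : alphabet) (V B n : nat).

Definition atom_code : finType :=
  ('I_V * 'I_V + 'I_V * 'I_V + 'I_B * 'I_V * 'I_V + S * 'I_V + 'I_n * 'I_V + 'I_V)%type.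

Definition atom_of_code (c : atom_code) : fo S :=
  match c with
  | inl (inl (inl (inl (inl (x, y))))) => FLe S x y
  | inl (inl (inl (inl (inr (x, y))))) => FEq S x y
  | inl (inl (inl (inr (i, x, y)))) => FSucc S i x y
  | inl (inl (inr (c, x))) => FLab c x
  | inl (inr (i, x)) => FQ S i x
  | inr x => FRoot S x
  end.

Lemma atom_of_code_bounded c : [&& bounded_atom V B n (atom_of_code c),
  bounded V B (atom_of_code c), fo_sort_ok n (atom_of_code c) & qrank (atom_of_code c) == 0].
Proof. by case: c => [[[[[[x y]|[x y]]|[[i x] y]]|[c x]]|[i x]]|x] /=; rewrite ?ltn_ord. Qed.

Lemma atom_of_code_onto a : bounded_atom V B n a -> exists c, atom_of_code c = a.
Proof.
case: a => //=.
- by move=> x y /andP[hx hy]; exists (inl (inl (inl (inl (inl (Ordinal hx, Ordinal hy)))))).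
- move=> i x y /and3P[hi hx hy].
  by exists (inl (inl (inl (inr (Ordinal hi, Ordinal hx, Ordinal hy))))).
- by move=> c x hx; exists (inl (inl (inr (c, Ordinal hx)))).
- by move=> i x /andP[hi hx]; exists (inl (inr (Ordinal hi, Ordinal hx))).
- by move=> x hx; exists (inr (Ordinal hx)).
- by move=> x y /andP[hx hy]; exists (inl (inl (inl (inl (inr (Ordinal hx, Ordinal hy)))))).
Qed.

Definition atom_profile (b : nat -> bool) (t : rtree S) nu : {ffun atom_code -> bool} :=
  [ffun c => all b (fo_fv (atom_of_code c)) && classicb (sat t nu (atom_of_code c))].

Fixpoint rank_type r : finType :=
  if r is r'.+1 then ({ffun atom_code -> bool} * {ffun 'I_V -> {set rank_type r'}})%type
  else {ffun atom_code -> bool}.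

Fixpoint type_of r b (t : rtree S) nu : rank_type r :=
  match r as r0 return rank_type r0 with
  | 0 => atom_profile b t nu
  | r'.+1 => (atom_profile b t nu, [ffun x : 'I_V =>
      [set j | classicb (exists2 v, t v <> None & type_of r' (add_var b x) t (upd nu x v) = j)]])
  end.

Definition ext_types r b (t : rtree S) nu (x : 'I_V) : {set rank_type r} :=
  (type_of r.+1 b t nu).2 x.

Lemma type_ofS r b t nu :
  type_of r.+1 b t nu = (atom_profile b t nu, [ffun x => ext_types r b t nu x]).
Proof. by rewrite /ext_types /=; f_equal; apply/ffunP => x; rewrite !ffunE. Qed.

Lemma mem_ext_types r b t nu x j : j \in ext_types r b t nu x <->
  exists2 v, t v <> None & type_of r (add_var b x) t (upd nu x v) = j.
Proof. by rewrite /ext_types /= ffunE inE; split => /classicbP. Qed.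

Definition literals b (p : {ffun atom_code -> bool}) : seq (fo S) :=
  [seq if p c then atom_of_code c else FNot (atom_of_code c)
  | c <- enum atom_code & all b (fo_fv (atom_of_code c))].

Fixpoint hintikka r b : rank_type r -> fo S :=
  match r as r0 return rank_type r0 -> fo S with
  | 0 => fun i => fbigand (literals b i)
  | r'.+1 => fun i => FAnd (fbigand (literals b i.1))
      (fbigand [seq fext_exactly x [seq @hintikka r' (add_var b x) j | j <- enum (i.2 x)]
               | x : 'I_V <- enum 'I_V])
  end.

Lemma atom_profile_eq b t nu t' nu' : atom_profile b t' nu' = atom_profile b t nu <->
  forall c, all b (fo_fv (atom_of_code c)) ->
    (sat t' nu' (atom_of_code c) <-> sat t nu (atom_of_code c)).
Proof.
split.
- move=> /ffunP e c hc; move: (e c); rewrite !ffunE hc /=.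
  by do 2 case: classicbP => //.
- move=> h; apply/ffunP => c; rewrite !ffunE; case hc: (all _ _) => //=.
  have := h c hc; case: classicbP => h1; case: classicbP => h2 // [f g].
  + by case: h2; apply: f.
  + by case: h1; apply: g.
Qed.

Lemma sat_literals b t nu t' nu' : sat t' nu' (fbigand (literals b (atom_profile b t nu))) <->
  atom_profile b t' nu' = atom_profile b t nu.
Proof.
rewrite atom_profile_eq /literals sat_fbigand_map; split.
- move=> h c hc; move: (h c); rewrite mem_filter hc mem_enum /= ffunE hc /=.
  case: classicbP => hs /(_ isT) //= hs'; tauto.
- move=> h c; rewrite mem_filter mem_enum andbT => hc /=; rewrite ffunE hc /=.
  case: classicbP => hs /=; have := h c hc; tauto.
Qed.

Lemma atom_profile_agree b t1 nu1 t2 nu2 :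
  atom_profile b t1 nu1 = atom_profile b t2 nu2 -> atoms_agree V B n b t1 nu1 t2 nu2.
Proof.
by move=> /atom_profile_eq h a ha hb; have [c ec] := atom_of_code_onto ha; subst a; apply: h.
Qed.

Section HintikkaStep.
Variable r : nat.
Hypothesis sat_hintikka_r : forall b t nu t' nu',
  sat t' nu' (hintikka b (type_of r b t nu)) <-> type_of r b t' nu' = type_of r b t nu.

Lemma sat_hintikka_ext b t nu t' nu' (x : 'I_V) :
  sat t' nu' (fext_exactly x [seq hintikka (add_var b x) j | j <- enum (ext_types r b t nu x)])
  <-> ext_types r b t' nu' x = ext_types r b t nu x.
Proof.
have sat_ext_type j v' : j \in ext_types r b t nu x ->
    sat t' (upd nu' x v') (hintikka (add_var b x) j) <->
    type_of r (add_var b x) t' (upd nu' x v') = j.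
  by move=> /mem_ext_types [v _ <-]; apply: sat_hintikka_r.
rewrite sat_fext_exactly; split.
- case=> hall hex; apply/eqP; rewrite eqEsubset; apply/andP; split; apply/subsetP => j.
  + case/mem_ext_types => v' hv' <-; have [f /In_map [j' hj' ->]] := hall v' hv'.
    by move/InE: hj'; rewrite mem_enum => hj' /(sat_ext_type _ _ hj') ->.
  + move=> hj; have hf : List.In (hintikka (add_var b x) j)
        [seq hintikka (add_var b x) j | j <- enum (ext_types r b t nu x)].
      by apply/In_map; exists j => //; apply/InE; rewrite mem_enum.
    have [v' [hv' /(sat_ext_type _ _ hj) ej]] := hex _ hf.
    by apply/mem_ext_types; exists v'.
- move=> e; split.
  + move=> v' hv'; pose j := type_of r (add_var b x) t' (upd nu' x v').
    have hj : j \in ext_types r b t nu x by rewrite -e; apply/mem_ext_types; exists v'.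
    exists (hintikka (add_var b x) j); last exact/sat_ext_type.
    by apply/In_map; exists j => //; apply/InE; rewrite mem_enum.
  + move=> f /In_map [j /InE]; rewrite mem_enum => hj ->.
    have /mem_ext_types [v' hv' ej] : j \in ext_types r b t' nu' x by rewrite e.
    by exists v'; split => //; apply/sat_ext_type.
Qed.

End HintikkaStep.

Lemma sat_hintikka r : forall b t nu t' nu',
  sat t' nu' (hintikka b (type_of r b t nu)) <-> type_of r b t' nu' = type_of r b t nu.
Proof.
elim: r => [|r IH] b t nu t' nu'; first exact: sat_literals.
rewrite !type_ofS /= sat_literals sat_fbigand_map; split.
- move=> [-> hx]; congr pair; apply/ffunP => x; rewrite !ffunE.
  by apply/sat_hintikka_ext => //; move: (hx x); rewrite mem_enum ffunE => /(_ isT).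
- case=> -> /ffunP ex; split => // x _; rewrite ffunE.
  by apply/sat_hintikka_ext => //; move: (ex x); rewrite !ffunE.
Qed.

Lemma type_of_ef_equiv r : forall b t1 nu1 t2 nu2,
  type_of r b t1 nu1 = type_of r b t2 nu2 -> ef_equiv V B n r b t1 nu1 t2 nu2.
Proof.
elim: r => [|r IH] b t1 nu1 t2 nu2.
  by move=> e; split => //; apply: atom_profile_agree.
rewrite !type_ofS => -[e0 /ffunP ef]; split; first exact: atom_profile_agree.
move=> x hx; have := ef (Ordinal hx); rewrite !ffunE => es; split.
- move=> v hv; have /mem_ext_types [v' hv' ej] :
      type_of r (add_var b x) t1 (upd nu1 x v) \in ext_types r b t2 nu2 (Ordinal hx).
    by rewrite -es; apply/mem_ext_types; exists v.
  by exists v' => //; apply: IH; rewrite ej.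
- move=> v' hv'; have /mem_ext_types [v hv ej] :
      type_of r (add_var b x) t2 (upd nu2 x v') \in ext_types r b t1 nu1 (Ordinal hx).
    by rewrite es; apply/mem_ext_types; exists v'.
  by exists v => //; apply: IH; rewrite ej.
Qed.

Definition admissible b (f : fo S) := [&& bounded V B f, fo_sort_ok n f & all b (fo_fv f)].

Lemma admissible_FAnd b f g : admissible b (FAnd f g) = admissible b f && admissible b g.
Proof.
rewrite /admissible /= all_cat.
by case: (bounded V B f); case: (fo_sort_ok n f); case: (all b _); rewrite ?andbF.
Qed.

Lemma admissible_FEx b (x : 'I_V) f : admissible (add_var b x) f -> admissible b (FEx x f).
Proof.
case/and3P=> hf sf /allP af; rewrite /admissible /= ltn_ord hf sf; apply/allP => z.
by rewrite mem_filter => /andP[zx /af]; rewrite /add_var (negbTE zx).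
Qed.

Lemma admissible_fbigand b l : 0 < V -> (forall f, List.In f l -> admissible b f) ->
  admissible b (fbigand l).
Proof.
move=> hV; apply: fbigand_ind => [_|f g hf hg]; first by rewrite /admissible /= hV.
by rewrite admissible_FAnd hf.
Qed.

Lemma admissible_fext_exactly b (x : 'I_V) l : 0 < V ->
  (forall f, List.In f l -> admissible (add_var b x) f) -> admissible b (fext_exactly x l).
Proof.
move=> hV hl; rewrite admissible_FAnd; apply/andP; split.
- apply: admissible_FEx; apply: admissible_fbigand => // f /= [<-|/In_map [g /hl hg ->]] //.
  by rewrite /admissible /= ltn_ord /add_var eqxx.
- by apply: admissible_fbigand => // f /In_map [g /hl hg ->]; apply: admissible_FEx.
Qed.

Lemma admissible_literals b p f : List.In f (literals b p) -> admissible b f.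
Proof.
move=> /In_map [c /InE]; rewrite mem_filter => /andP[hc _] ->.
have /and4P[_ hg hs _] := atom_of_code_bounded c.
by case: (p c); rewrite /admissible /= hg hs hc.
Qed.

Lemma hintikka_admissible r : 0 < V -> forall b (i : rank_type r), admissible b (hintikka b i).
Proof.
move=> hV; elim: r => [|r IH] b i /=.
  by apply: admissible_fbigand => // f /admissible_literals.
rewrite admissible_FAnd admissible_fbigand //= => [|f /admissible_literals //].
apply: admissible_fbigand => // f /In_map [x _ ->].
by apply: admissible_fext_exactly => // g /In_map [j _ ->]; apply: IH.
Qed.

Lemma qrank_literals b p f : List.In f (literals b p) -> qrank f = 0.
Proof.
move=> /In_map [c _ ->]; have /and4P[_ _ _ /eqP q] := atom_of_code_bounded c.
by case: (p c).
Qed.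

Lemma qrank_fext_exactly x (l : seq (fo S)) k : (forall f, List.In f l -> qrank f <= k) ->
  qrank (fext_exactly x l) <= k.+1.
Proof.
move=> hl; rewrite -[qrank _]/(maxn (qrank (fbigand (FEq S x x :: map (@FNot S) l))).+1
                                   (qrank (fand_exists x l))).
rewrite geq_max ltnS; apply/andP; split.
- apply: qrank_fbigand => [|f /= [<-|/In_map [g /hl hg ->]]] //; by left.
- by apply: qrank_fbigand => [|f /In_map [g /hl hg ->]]; [right|].
Qed.

(* At rank 0 a placed variable [y] guarantees a nonempty conjunction of literals. *)
Lemma hintikka_qrank r : forall (b : nat -> bool) (i : rank_type r),
  (0 < r \/ exists2 y, y < V & b y) -> qrank (hintikka b i) <= r.
Proof.
elim: r => [|r IH] b i h /=.
- case: h => // -[y hy hby]; apply: qrank_fbigand => [|f /qrank_literals ->] //.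
  left; rewrite /literals; set c : atom_code := inr (Ordinal hy).
  have : c \in [seq c <- enum atom_code | all b (fo_fv (atom_of_code c))].
    by rewrite mem_filter mem_enum /= hby.
  by case: [seq c <- enum atom_code | _].
- rewrite geq_max; apply/andP; split.
  + by apply: qrank_fbigand => [|f /qrank_literals ->]; [right|].
  + apply: qrank_fbigand => [|f /In_map [x _ ->]]; first by right.
    apply: qrank_fext_exactly => g /In_map [j _ ->]; apply: IH; right.
    by exists x => //; rewrite /add_var eqxx.
Qed.

End RankTypes.

(** * Vertices of a flattened tree *)

Lemma catI (T : eqType) (s : seq T) : injective (cat s).
Proof. by elim: s => //= x s IH s1 s2 [/IH]. Qed.

Lemma prefix_anti (T : eqType) : antisymmetric (@prefix T).
Proof.
move=> a c /andP[/prefixP [e1 ->] /prefixP [e2]].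
rewrite -catA -{1}(cats0 a) => /catI; by case: e1 => [|//]; rewrite cats0.
Qed.

Lemma prefix_cat_or (T : eqType) (a b c : seq T) :
  prefix a (b ++ c) -> prefix a b \/ exists e, a = b ++ e.
Proof.
case: (leqP (size a) (size b)) => hs.
- by rewrite !prefixE takel_cat // => h; left.
- rewrite prefixE => /eqP h; right; exists (drop (size b) a).
  have tb : take (size b) a = b by rewrite -h -take_min (minn_idPl (ltnW hs)) take_size_cat.
  by rewrite -{1}(cat_take_drop (size b) a) tb.
Qed.

Section WellFormed.
Variables (L : Type) (ar : L -> nat) (n : nat) (t : rtree L).
Hypothesis wf : wf_tree ar n t.

Lemma wf_root : exists a, t [::] = Some (inl a).
Proof. by case: wf. Qed.

Lemma wf_parent w c : t (rcons w c) <> None -> exists a, t w = Some (inl a).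
Proof.
case: wf => _ h hc; move: (h w); case: (t w) => [[a|j]|] ha; first by exists a.
- by case: ha => _ /(_ c).
- by move: (ha c).
Qed.

Lemma wf_leaf w j : t w = Some (inr j) -> forall e, t (w ++ e) <> None -> e = [::].
Proof.
move=> hw e; elim/last_ind: e => [|e c IH] // h.
rewrite -rcons_cat in h; have [a ha] := wf_parent h.
have /IH ee : t (w ++ e) <> None by rewrite ha.
by move: ha; rewrite ee cats0 hw.
Qed.

Lemma wf_var_lt w j : t w = Some (inr j) -> j < n.
Proof. by case: wf => _ /(_ w) + hw; rewrite hw => -[]. Qed.

Lemma wf_leaf_nil w j : t w = Some (inr j) -> w <> [::].
Proof. by move=> hw ew; have [a ha] := wf_root; move: hw; rewrite ew ha. Qed.

End WellFormed.

Section Flatten.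
Variable S : alphabet.
Implicit Types (T : rtree2 S) (u p : seq nat) (L : seq (seq nat)).

Definition wf_tree2 m T :=
  wf_tree fst m T /\ forall w k s, T w = Some (inl (k, s)) -> wf_tree (@arity S) k s.

(* A vertex of [flat T] is described by the list [L] of positions of the
   variable leaves through which its address passes, one per inner tree, and
   its position [p] in the last inner tree. *)
Definition var_at T u l : nat :=
  if T u is Some (inl (_, s)) then (if s l is Some (inr i) then i else 0) else 0.

Definition follow T u L := foldl (fun u l => rcons u (var_at T u l)) u L.
Arguments follow : simpl never.

Fixpoint var_path T u L : Prop :=
  match L with
  | [::] => exists ks, T u = Some (inl ks)
  | l :: L' => exists k s i,
      [/\ T u = Some (inl (k, s)), s l = Some (inr i) & var_path T (rcons u i) L']
  end.

Definition end_pos T u p : Prop := exists k s, T u = Some (inl (k, s)) /\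
  ((exists a, s p = Some (inl a)) \/
   exists i j, s p = Some (inr i) /\ T (rcons u i) = Some (inr j)).

Definition flat_label T u p : option (S + nat) :=
  match T u with
  | Some (inl (_, s)) =>
      match s p with
      | Some (inl a) => Some (inl a)
      | Some (inr i) => if T (rcons u i) is Some (inr j) then Some (inr j) else None
      | None => None
      end
  | _ => None
  end.

Definition addr := (seq (seq nat) * seq nat)%type.
Definition flat_vertex (X : addr) := flatten X.1 ++ X.2.
Definition flat_addr T (X : addr) := var_path T [::] X.1 /\ end_pos T (follow T [::] X.1) X.2.

Definition flat_step T (st : option fstate) c :=
  if st is Some (FNode u p) then resolve T u (rcons p c) else None.

Lemma flat_stateE T w : flat_state T w = foldl (flat_step T) (resolve T [::] [::]) w.
Proof. by []. Qed.

Lemma var_path_root T u L : var_path T u L -> exists ks, T u = Some (inl ks).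
Proof. by case: L => [|l L] //= [k [s [i [-> _ _]]]]; exists (k, s). Qed.

Lemma follow_cons T u l L k s i : T u = Some (inl (k, s)) -> s l = Some (inr i) ->
  follow T u (l :: L) = follow T (rcons u i) L.
Proof. by move=> hu hl; rewrite /follow /= /var_at hu hl. Qed.

Lemma follow_cat T u L1 L2 : follow T u (L1 ++ L2) = follow T (follow T u L1) L2.
Proof. by rewrite /follow foldl_cat. Qed.

Lemma var_path_end T u L : var_path T u L -> exists ks, T (follow T u L) = Some (inl ks).
Proof.
elim: L u => [|l L IH] u //= [k [s [i [hu hl hL]]]].
by rewrite (follow_cons _ hu hl); apply: IH.
Qed.

Lemma var_path_cat T L1 : forall u L2,
  var_path T u (L1 ++ L2) <-> var_path T u L1 /\ var_path T (follow T u L1) L2.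
Proof.
elim: L1 => [|l L1 IH] u L2 /=.
  by split => [h|[]//]; split => //; apply: var_path_root h.
split.
- move=> [k [s [i [hu hl /IH [h1 h2]]]]].
  by split; [exists k, s, i | rewrite (follow_cons _ hu hl)].
- move=> [[k [s [i [hu hl hL]]]] h2]; exists k, s, i; split => //.
  by apply/IH; split => //; rewrite -(follow_cons _ hu hl).
Qed.

Lemma var_path_take T L j : var_path T [::] L -> var_path T [::] (take j L).
Proof. by rewrite -{1}(cat_take_drop j L) => /var_path_cat []. Qed.

Lemma var_path_rcons T L l k s i : var_path T [::] L ->
  T (follow T [::] L) = Some (inl (k, s)) -> s l = Some (inr i) ->
  (exists ks, T (rcons (follow T [::] L) i) = Some (inl ks)) ->
  var_path T [::] (rcons L l) /\ follow T [::] (rcons L l) = rcons (follow T [::] L) i.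
Proof.
move=> hL hu hl hc; rewrite -cats1 follow_cat (follow_cons _ hu hl); split => //.
by apply/var_path_cat; split => //; exists k, s, i.
Qed.

Lemma flat_label_inl T u k s p c : T u = Some (inl (k, s)) ->
  (flat_label T u p = Some (inl c) <-> s p = Some (inl c)).
Proof.
move=> hu; rewrite /flat_label hu; case: (s p) => [[a|i]|] //.
by case: (T (rcons u i)) => [[?|?]|].
Qed.

Lemma flat_label_inr T u k s p j : T u = Some (inl (k, s)) ->
  (flat_label T u p = Some (inr j) <->
   exists i, s p = Some (inr i) /\ T (rcons u i) = Some (inr j)).
Proof.
move=> hu; rewrite /flat_label hu; case: (s p) => [[a|i]|]; try by split=> [|[i' []]].
split; last by case=> i' [[<-] ->].
by case ht: (T (rcons u i)) => [[x|j']|] // [<-]; exists i.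
Qed.

Section WellFormed2.
Variables (m : nat) (T : rtree2 S).
Hypothesis wT : wf_tree2 m T.

Lemma flat_state_local u k s p : T u = Some (inl (k, s)) -> s p <> None ->
  foldl (flat_step T) (Some (FNode u [::])) p = resolve T u p.
Proof.
move=> hu; have ws := wT.2 _ _ _ hu.
elim/last_ind: p => [|p c IH] hp.
  by have [a ha] := wf_root ws; rewrite /= /resolve hu ha.
rewrite foldl_rcons; have [a ha] := wf_parent ws hp.
by rewrite IH ?ha // {1}/resolve hu ha.
Qed.

Lemma var_path_nonnil u L : var_path T u L -> forall l, l \in L -> l <> [::].
Proof.
elim: L u => [|l L IH] u //= [k [s [i [hu hl hL]]]] l'; rewrite inE => /orP[/eqP ->|hl'].
- exact (wf_leaf_nil (wT.2 _ _ _ hu) hl).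
- exact: IH hL _ hl'.
Qed.

Lemma flat_state_path u L p : var_path T u L -> end_pos T (follow T u L) p ->
  foldl (flat_step T) (Some (FNode u [::])) (flatten L ++ p) = resolve T (follow T u L) p.
Proof.
elim: L u => [|l L IH] u /=.
  move=> _ [k [s [hu hp]]]; apply: flat_state_local hu _.
  by case: hp => [[a ->]|[i [j [-> _]]]].
move=> [k [s [i [hu hl hL]]]]; rewrite (follow_cons _ hu hl) => hF.
rewrite -catA foldl_cat (flat_state_local hu) ?hl // /resolve hu hl.
by have [[k' s'] ->] := var_path_root hL; apply: IH.
Qed.

Lemma resolve_root : resolve T [::] [::] = Some (FNode [::] [::]).
Proof.
have [[k s] h0] := wf_root wT.1.
by have [a ha] := wf_root (wT.2 _ _ _ h0); rewrite /resolve h0 ha.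
Qed.

Lemma flat_addr_label X : flat_addr T X ->
  flat T (flat_vertex X) = flat_label T (follow T [::] X.1) X.2 /\
  flat_label T (follow T [::] X.1) X.2 <> None.
Proof.
case=> hL hF; rewrite /flat flat_stateE resolve_root (flat_state_path hL hF).
case: hF => k [s [hu [[a ha]|[i [j [hi hj]]]]]];
  by rewrite /resolve /flat_label hu ?ha ?hi ?hj /= ?hu ?ha ?hi ?hj.
Qed.

Lemma flat_state_node w u p : flat_state T w = Some (FNode u p) ->
  exists L, [/\ var_path T [::] L, follow T [::] L = u, w = flatten L ++ p &
    exists k s a, T u = Some (inl (k, s)) /\ s p = Some (inl a)].
Proof.
elim/last_ind: w u p => [|w c IH] u' p'.
  rewrite flat_stateE /= resolve_root => -[<- <-]; exists [::]; split => //.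
  - by have [a h0] := wf_root wT.1; exists a.
  - have [[k s] h0] := wf_root wT.1.
    by have [a ha] := wf_root (wT.2 _ _ _ h0); exists k, s, a.
rewrite flat_stateE foldl_rcons -flat_stateE.
case E: (flat_state T w) => [[u p|j]|] //=.
have [L [hL <- hw [k [s [a [hu hp]]]]]] := IH u p E.
rewrite /resolve hu; case hs: (s (rcons p c)) => [[a'|i]|] //.
  by move=> [<- <-]; exists L; split => //; [rewrite hw rcons_cat | exists k, s, a'].
case ht: (T (rcons (follow T [::] L) i)) => [[[k' s']|j]|] // [<- <-].
have [hL' hfol'] := var_path_rcons hL hu hs (ex_intro _ _ ht).
exists (rcons L (rcons p c)); split => //.
- by rewrite flatten_rcons cats0 hw rcons_cat.
- by have [a'' ha''] := wf_root (wT.2 _ _ _ ht); exists k', s', a''.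
Qed.

Lemma flat_addr_complete w : flat T w <> None -> exists2 X, flat_addr T X & w = flat_vertex X.
Proof.
rewrite /flat; case E: (flat_state T w) => [[u p|j]|] // _.
  have [L [hL hfol hw [k [s [a [hu hp]]]]]] := flat_state_node E.
  by exists (L, p) => //; split; rewrite //= hfol; exists k, s; split => //; left; exists a.
elim/last_ind: w E => [|w c _]; first by rewrite flat_stateE resolve_root.
rewrite flat_stateE foldl_rcons -flat_stateE.
case E: (flat_state T w) => [[u p|j']|] //=.
have [L [hL hfol hw [k [s [a [hu hp]]]]]] := flat_state_node E.
rewrite /resolve hu; case hs: (s (rcons p c)) => [[a'|i]|] //.
case ht: (T (rcons u i)) => [[x|j']|] // _.
exists (L, rcons p c); last by rewrite /flat_vertex hw rcons_cat.
by split; rewrite //= hfol; exists k, s; split => //; right; exists i, j'.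
Qed.

Lemma end_pos_not_below u l L p : var_path T u (l :: L) -> end_pos T u p -> ~~ prefix l p.
Proof.
move=> [k [s [i [hu hl hL]]]] [k' [s' [hu' hp]]]; move: hu' hp; rewrite hu => -[_ <-] hp.
apply/negP => /prefixP [e he]; have ws := wT.2 _ _ _ hu.
have hpn : s p <> None by case: hp => [[a ->]|[i' [j [-> _]]]].
have e0 : e = [::] by apply: (wf_leaf ws hl); rewrite -he.
rewrite e0 cats0 in he; subst p; rewrite hl in hp.
case: hp => [[a //]|[i' [j [[<-] hj]]]]; have [ks hc] := var_path_root hL; by rewrite hc in hj.
Qed.

Lemma prefix_flatten L : forall L' u p p',
  var_path T u L -> end_pos T (follow T u L) p ->
  var_path T u L' -> end_pos T (follow T u L') p' ->
  prefix (flatten L ++ p) (flatten L' ++ p') =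
  [&& size L <= size L', take (size L) L' == L & prefix p (nth p' L' (size L))].
Proof.
elim: L => [|l L IH] [|l' L'] u p p' /=.
- by rewrite ?take0 ?eqxx.
- move=> _ hF hL' _; rewrite ?take0 ?eqxx /= -catA; apply/idP/idP; last exact: prefix_catl.
  case/prefix_cat_or => [//|[e he]]; subst p.
  by have := end_pos_not_below hL' hF; rewrite prefix_prefix.
- move=> hL _ _ hF'; rewrite -catA; apply/negP => /catl_prefix hp.
  by have := end_pos_not_below hL hF'; rewrite hp.
move=> hL hF hL' hF'.
have [k [s [i [hu hl hLL]]]] := hL; have [k' [s' [i' [hu' hl' hLL']]]] := hL'.
move: hu' hl'; rewrite hu => -[_ <-] hl'.
rewrite (follow_cons _ hu hl) in hF; rewrite (follow_cons _ hu hl') in hF'.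
rewrite -!catA; case: (eqVneq l l') => [el|ne].
  subst l'; move: hl'; rewrite hl => -[ei]; subst i'.
  by rewrite prefix_catr // eqxx /= ltnS eqseq_cons eqxx /=; apply: IH hLL hF hLL' hF'.
rewrite eqseq_cons eq_sym (negbTE ne) andbF /=; have ws := wT.2 _ _ _ hu.
apply/negP => /catl_prefix /prefix_cat_or [/prefixP [e he]|[e he]].
- have e0 : e = [::] by apply: (wf_leaf ws hl); rewrite -he hl'.
  by move: ne; rewrite he e0 cats0 eqxx.
- have e0 : e = [::] by apply: (wf_leaf ws hl'); rewrite -he hl.
  by move: ne; rewrite he e0 cats0 eqxx.
Qed.

Lemma prefix_flat_vertex X Y : flat_addr T X -> flat_addr T Y ->
  prefix (flat_vertex X) (flat_vertex Y) =
  [&& size X.1 <= size Y.1, take (size X.1) Y.1 == X.1 & prefix X.2 (nth Y.2 Y.1 (size X.1))].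
Proof. by case=> hL hF [hL' hF']; apply: prefix_flatten hL hF hL' hF'. Qed.

Lemma flat_vertex_nil X : flat_addr T X -> (flat_vertex X = [::] <-> X = ([::], [::])).
Proof.
case: X => [L p] [hL _]; split => [|[-> ->]] //.
case: L hL => [|l L] hL; first by rewrite /flat_vertex /= => ->.
have := var_path_nonnil hL (l := l); rewrite inE eqxx => /(_ isT).
by rewrite /flat_vertex /=; case: l {hL}.
Qed.

Lemma flat_vertex_rcons X Y c : flat_addr T X -> flat_addr T Y ->
  (flat_vertex Y = rcons (flat_vertex X) c <->
   Y = (X.1, rcons X.2 c) \/ Y = (rcons X.1 (rcons X.2 c), [::])).
Proof.
case: X Y => [L p] [L' p'] hX hY; split; last first.
  by case=> -[-> ->]; rewrite /flat_vertex /= ?flatten_rcons ?cats0 rcons_cat.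
move=> H; have := prefix_rcons (flat_vertex (L, p)) c.
rewrite -H (prefix_flat_vertex hX hY) /= => /and3P[hs /eqP ht hp].
case: (leqP (size L') (size L)) => hs'.
  have eL : L' = L by rewrite -ht take_oversize.
  subst L'; left; congr pair; apply: (@catI _ (flatten L)).
  by move: H; rewrite /flat_vertex /= rcons_cat.
case ed: (drop (size L) L') => [|l R].
  by move: hs'; rewrite -subn_gt0 -size_drop ed.
have eL' : L' = L ++ l :: R by rewrite -ed -{1}ht cat_take_drop.
subst L'; move: hp; rewrite nth_cat ltnn subnn /= => /prefixP [e el]; subst l.
move: H; rewrite /flat_vertex flatten_cat /= -!catA rcons_cat => /catI.
rewrite -cats1 => /catI eq.
have [_ hLR] := (var_path_cat T L [::] ((p ++ e) :: R)).1 hY.1.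
have hne : e <> [::].
  move=> e0; have := end_pos_not_below hLR hX.2; by rewrite e0 cats0 prefix_refl.
have := congr1 size eq; rewrite !size_cat /=.
case: e hne eq hLR {hs ht ed hs' hY} => [//|c' [|c'' e]] _ eq hLR; last by rewrite /= !addSn.
move=> /eqP; rewrite /= eqSS addn_eq0 => /andP[/eqP/size0nil fR /eqP/size0nil ->].
have eR : R = [::].
  case: R hLR fR {eq} => // r R hLR /= fr; have := var_path_nonnil hLR (l := r).
  by rewrite !inE eqxx orbT => /(_ isT) {hLR}; move: fr; case: r.
by subst R; move: eq => [->]; right; rewrite cats1.
Qed.

End WellFormed2.
End Flatten.

(** * Composing games along a flattening *)

Definition asg0 : nat -> seq nat := fun _ => [::].

Section Composition.
Variables (S : alphabet) (V B Q m : nat).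
Notation ef_equiv := (ef_equiv V B).
Notation atoms_agree := (atoms_agree V B).
Implicit Types (T : rtree2 S) (b : nat -> bool) (X : nat -> addr).

Definition labels_ef T1 T2 := forall u,
  match T1 u, T2 u with
  | None, None => True
  | Some (inr i), Some (inr j) => i = j
  | Some (inl (k, s)), Some (inl (k', s')) => k = k' /\ ef_equiv k Q xpred0 s asg0 s' asg0
  | _, _ => False
  end.

Lemma labels_ef_sym T1 T2 : labels_ef T1 T2 -> labels_ef T2 T1.
Proof.
move=> h u; move: (h u); case: (T1 u) => [[[k s]|i]|]; case: (T2 u) => [[[k' s']|j]|] //.
by case=> -> he; split => //; apply: ef_equiv_sym.
Qed.

Lemma labels_ef_letter T1 T2 u k s1 : labels_ef T1 T2 -> T1 u = Some (inl (k, s1)) ->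
  exists s2, T2 u = Some (inl (k, s2)) /\ ef_equiv k Q xpred0 s1 asg0 s2 asg0.
Proof.
by move=> h e; move: (h u); rewrite e; case: (T2 u) => [[[k' s']|j]|] // [<- he]; exists s'.
Qed.

Lemma labels_ef_var T1 T2 u j : labels_ef T1 T2 -> T1 u = Some (inr j) -> T2 u = Some (inr j).
Proof. by move=> h e; move: (h u); rewrite e; case: (T2 u) => [[[k' s']|j']|] // ->. Qed.

(* A pebble [y] placed at the address [X y] sits, at depth [j], in the inner
   tree reached after the first [j] variable leaves of [(X y).1], at position
   [local_pos X j y]; the pebbles sharing that inner tree with [x] are
   [same_tree b X x j]. *)
Definition local_pos X j := fun y => nth (X y).2 (X y).1 j.

Lemma local_pos_end X j y : size (X y).1 <= j -> local_pos X j y = (X y).2.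
Proof. exact: nth_default. Qed.

Definition same_tree b X x j :=
  fun y => [&& b y, j <= size (X y).1 & take j (X y).1 == take j (X x).1].

(* The invariant of Duplicator's strategy in the [r]-round game on the
   flattenings: pebbles have addresses of the same depth, share inner trees
   in the same way, and at every depth the two inner trees holding a pebble
   sit at the same outer vertex and are [r]-round equivalent for the pebbles
   they hold. *)
Definition game_inv T1 T2 r b X1 X2 : Prop :=
 [/\ (forall x, b x ->
         [/\ flat_addr T1 (X1 x), flat_addr T2 (X2 x) & size (X1 x).1 = size (X2 x).1]),
     (forall x y, b x -> b y -> forall j, j <= size (X1 x).1 -> j <= size (X1 y).1 ->
         (take j (X1 x).1 = take j (X1 y).1 <-> take j (X2 x).1 = take j (X2 y).1)) &
     (forall x, b x -> forall j, j <= size (X1 x).1 ->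
         follow T1 [::] (take j (X1 x).1) = follow T2 [::] (take j (X2 x).1) /\
         forall k s1 s2, T1 (follow T1 [::] (take j (X1 x).1)) = Some (inl (k, s1)) ->
            T2 (follow T2 [::] (take j (X2 x).1)) = Some (inl (k, s2)) ->
            ef_equiv k r (same_tree b X1 x j) s1 (local_pos X1 j) s2 (local_pos X2 j))].

Lemma game_inv_size T1 T2 r b X1 X2 y :
  game_inv T1 T2 r b X1 X2 -> b y -> size (X1 y).1 = size (X2 y).1.
Proof. by case=> h1 _ _ /h1 []. Qed.

Lemma game_inv_sym T1 T2 r b X1 X2 : game_inv T1 T2 r b X1 X2 -> game_inv T2 T1 r b X2 X1.
Proof.
case=> h1 h2 h3; split.
- by move=> x bx; have [? ? ?] := h1 x bx.
- move=> x y bx ny j; have [_ _ <-] := h1 x bx; have [_ _ <-] := h1 y ny => jx jy.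
  by rewrite (h2 x y).
- move=> x bx j; have [_ _ e] := h1 x bx; rewrite -e => jx.
  have [eo hE] := h3 x bx j jx; split => // k s2 s1 e2 e1.
  apply: ef_equiv_sym; apply: ef_equiv_sub (hE k s1 s2 e1 e2) _.
  move=> z /and3P[bz jz /eqP tz]; have [_ _ ez] := h1 z bz.
  by rewrite /same_tree bz ez jz /=; apply/eqP; apply/(h2 z x bz bx) => //; rewrite ez.
Qed.

Lemma game_inv_sub T1 T2 r b (b' : nat -> bool) X1 X2 :
  game_inv T1 T2 r b X1 X2 -> (forall z, b' z -> b z) -> game_inv T1 T2 r b' X1 X2.
Proof.
case=> h1 h2 h3 hb; split.
- by move=> x /hb; apply: h1.
- by move=> x y /hb bx /hb ny; apply: h2.
- move=> x /hb bx j jx; have [eo hE] := h3 x bx j jx; split => // k s1 s2 e1 e2.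
  apply: ef_equiv_sub (hE k s1 s2 e1 e2) _ => z /and3P[bz jz tz].
  by rewrite /same_tree (hb _ bz) jz tz.
Qed.

Section Atoms.
Variables (T1 T2 : rtree2 S) (r : nat) (b : nat -> bool) (X1 X2 : nat -> addr).
Hypotheses (w1 : wf_tree2 m T1) (w2 : wf_tree2 m T2) (hR : labels_ef T1 T2)
  (hI : game_inv T1 T2 r b X1 X2).

Lemma local_atoms x j : b x -> j <= size (X1 x).1 ->
  exists k s1 s2, [/\ T1 (follow T1 [::] (take j (X1 x).1)) = Some (inl (k, s1)),
     T2 (follow T2 [::] (take j (X2 x).1)) = Some (inl (k, s2)) &
     atoms_agree k (same_tree b X1 x j) s1 (local_pos X1 j) s2 (local_pos X2 j)].
Proof.
move=> bx jx; case: hI => h1 _ h3; have [[hL1 _] _ _] := h1 x bx.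
have [[k s1] e1] := var_path_end (var_path_take j hL1).
have [eo hE] := h3 x bx j jx.
have [s2 [e2 _]] := labels_ef_letter hR e1; rewrite eo in e2.
by exists k, s1, s2; split => //; apply: ef_equiv_atoms (hE k s1 s2 e1 e2).
Qed.

Lemma same_tree_self x j : b x -> j <= size (X1 x).1 -> same_tree b X1 x j x.
Proof. by move=> bx jx; rewrite /same_tree bx jx eqxx. Qed.

Lemma game_inv_le x y : x < V -> y < V -> b x -> b y ->
  prefix (flat_vertex (X1 x)) (flat_vertex (X1 y)) ->
  prefix (flat_vertex (X2 x)) (flat_vertex (X2 y)).
Proof.
move=> xV yV bx ny; case: hI => h1 h2 _.
have [hX1 hX2 sx] := h1 x bx; have [hY1 hY2 sy] := h1 y ny.
rewrite (prefix_flat_vertex w1 hX1 hY1) (prefix_flat_vertex w2 hX2 hY2) -sx -sy.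
move=> /and3P[hs /eqP ht hp]; rewrite hs /=.
have tx : take (size (X1 x).1) (X1 x).1 = (X1 x).1 by rewrite take_size.
have [k [s1 [s2 [_ _ hA]]]] := local_atoms bx (leqnn _).
have hy : same_tree b X1 x (size (X1 x).1) y by rewrite /same_tree ny hs ht tx eqxx.
have /= := hA (FLe S x y); rewrite xV yV same_tree_self //= hy => /(_ isT isT) [+ _].
rewrite ![local_pos _ _ x]local_pos_end -?sx //.
move=> /(_ hp) ->; rewrite andbT; apply/eqP.
have [+ _] := h2 x y bx ny _ (leqnn _) hs; rewrite tx ht => /(_ erefl).
by rewrite sx take_size.
Qed.

Lemma game_inv_eq x y : x < V -> y < V -> b x -> b y ->
  flat_vertex (X1 x) = flat_vertex (X1 y) -> flat_vertex (X2 x) = flat_vertex (X2 y).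
Proof.
by move=> xV yV bx ny e; apply/prefix_anti/andP; split; apply: game_inv_le => //;
  rewrite e prefix_refl.
Qed.

Lemma game_inv_root x : x < V -> b x -> flat_vertex (X1 x) = [::] -> flat_vertex (X2 x) = [::].
Proof.
move=> xV bx; case: hI => h1 _ _; have [hX1 hX2 sx] := h1 x bx.
rewrite (flat_vertex_nil w1 hX1) (flat_vertex_nil w2 hX2) => ex.
have [k [s1 [s2 [_ _ hA]]]] := local_atoms bx (leq0n (size (X1 x).1)).
have /= := hA (FRoot S x); rewrite xV same_tree_self //= => /(_ isT isT) [+ _].
rewrite !local_pos_end ?ex -?sx ?ex // => /(_ erefl) ep.
by case: (X2 x) sx ep => L p; rewrite ex /= => /esym/size0nil -> ->.
Qed.

Lemma game_inv_lab c x : x < V -> b x ->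
  flat T1 (flat_vertex (X1 x)) = Some (inl c) -> flat T2 (flat_vertex (X2 x)) = Some (inl c).
Proof.
move=> xV bx; case: hI => h1 _ _; have [hX1 hX2 sx] := h1 x bx.
rewrite (flat_addr_label w1 hX1).1 (flat_addr_label w2 hX2).1.
have [k [s1 [s2 [e1 e2 hA]]]] := local_atoms bx (leqnn _).
rewrite take_size in e1; rewrite sx take_size in e2.
rewrite (flat_label_inl _ _ e1) (flat_label_inl _ _ e2).
have /= := hA (FLab c x); rewrite xV same_tree_self //= => /(_ isT isT) [+ _].
by rewrite !local_pos_end -?sx.
Qed.

Lemma game_inv_var i x : i < m -> x < V -> b x ->
  flat T1 (flat_vertex (X1 x)) = Some (inr i) -> flat T2 (flat_vertex (X2 x)) = Some (inr i).
Proof.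
move=> im xV bx; case: hI => h1 _ h3; have [hX1 hX2 sx] := h1 x bx.
rewrite (flat_addr_label w1 hX1).1 (flat_addr_label w2 hX2).1.
have [k [s1 [s2 [e1 e2 hA]]]] := local_atoms bx (leqnn _).
rewrite take_size in e1; rewrite sx take_size in e2.
rewrite (flat_label_inr _ _ e1) (flat_label_inr _ _ e2) => -[i' [hi' ht]].
exists i'; split; last first.
  have [eo _] := h3 x bx _ (leqnn _); rewrite take_size sx take_size in eo.
  by rewrite -eo; apply: labels_ef_var hR ht.
have i'k : i' < k := wf_var_lt (w1.2 _ _ _ e1) hi'.
have /= := hA (FQ S i' x); rewrite i'k xV same_tree_self //= => /(_ isT isT) [+ _].
by rewrite !local_pos_end -?sx // => /(_ hi').
Qed.

Section Successor.
Variables (i x y : nat).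
Hypotheses (iB : i < B) (xV : x < V) (yV : y < V) (bx : b x) (bY : b y).

Lemma local_succ j : j <= size (X1 x).1 -> same_tree b X1 x j y ->
  local_pos X1 j y = rcons (local_pos X1 j x) i -> local_pos X2 j y = rcons (local_pos X2 j x) i.
Proof.
move=> jx hy; have [k [s1 [s2 [_ _ hA]]]] := local_atoms bx jx.
by have /= := hA (FSucc S i x y); rewrite iB xV yV same_tree_self //= hy => /(_ isT isT) [].
Qed.

Lemma game_inv_succ_same : X1 y = ((X1 x).1, rcons (X1 x).2 i) ->
  X2 y = ((X2 x).1, rcons (X2 x).2 i).
Proof.
case: hI => h1 h2 _; have [_ _ sx] := h1 x bx; have [_ _ sy] := h1 y bY.
move=> eY; have [ey py] : (X1 y).1 = (X1 x).1 /\ (X1 y).2 = rcons (X1 x).2 i by rewrite eY.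
have jy : size (X1 x).1 <= size (X1 y).1 by rewrite ey.
have ey' : (X2 y).1 = (X2 x).1.
  have [+ _] := h2 x y bx bY _ (leqnn _) jy; rewrite ey => /(_ erefl).
  by rewrite sx take_size take_oversize // -sy ey sx.
have hy : same_tree b X1 x (size (X1 x).1) y by rewrite /same_tree bY jy ey eqxx.
have := local_succ (leqnn _) hy; rewrite !local_pos_end ?ey ?ey' -?sx // => /(_ py).
by case: (X2 y) ey' => L p /= -> ->.
Qed.

(* The successor atom at depth [size (X1 x).1] pins down the variable leaf
   below [x]; the root atom one level deeper puts [y] at the root of the next
   inner tree. *)
Lemma game_inv_succ_next : X1 y = (rcons (X1 x).1 (rcons (X1 x).2 i), [::]) ->
  X2 y = (rcons (X2 x).1 (rcons (X2 x).2 i), [::]).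
Proof.
case: hI => h1 h2 _; have [_ _ sx] := h1 x bx; have [_ _ sy] := h1 y bY.
move=> eY; have [ey py] : (X1 y).1 = rcons (X1 x).1 (rcons (X1 x).2 i) /\ (X1 y).2 = [::].
  by rewrite eY.
have jy : size (X1 x).1 < size (X1 y).1 by rewrite ey size_rcons.
have tjy : take (size (X1 x).1) (X1 y).1 = (X1 x).1 by rewrite ey -cats1 take_size_cat.
have hy : same_tree b X1 x (size (X1 x).1) y.
  by rewrite /same_tree bY (ltnW jy) tjy take_size eqxx.
have e2 : take (size (X2 x).1) (X2 y).1 = (X2 x).1.
  have [+ _] := h2 x y bx bY _ (leqnn _) (ltnW jy); rewrite tjy take_size => /(_ erefl).
  by rewrite sx take_size.
have := local_succ (leqnn _) hy; rewrite ![local_pos _ _ x]local_pos_end -?sx //.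
rewrite {1}/local_pos ey nth_rcons ltnn eqxx => /(_ erefl); rewrite sx => ny.
have [k [s1 [s2 [_ _ hA]]]] := local_atoms bY (leqnn (size (X1 y).1)).
have /= := hA (FRoot S y); rewrite yV same_tree_self //= => /(_ isT isT) [+ _].
rewrite !local_pos_end -?sy // => /(_ py) py2.
have sy2 : size (X2 y).1 = (size (X2 x).1).+1 by rewrite -sy ey size_rcons sx.
rewrite /local_pos in ny; case: (X2 y) e2 ny py2 sy2 => L p /= e2 ny -> sL; congr pair.
rewrite -(cat_take_drop (size (X2 x).1) L) e2 (drop_nth [::]) ?sL //.
by rewrite drop_oversize ?sL // cats1 (set_nth_default p) ?sL // ny.
Qed.

End Successor.

Lemma game_inv_succ i x y : i < B -> x < V -> y < V -> b x -> b y ->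
  flat_vertex (X1 y) = rcons (flat_vertex (X1 x)) i ->
  flat_vertex (X2 y) = rcons (flat_vertex (X2 x)) i.
Proof.
move=> iB xV yV bx bY; case: hI => h1 _ _.
have [hX1 hX2 _] := h1 x bx; have [hY1 hY2 _] := h1 y bY.
rewrite (flat_vertex_rcons w1 _ hX1 hY1) (flat_vertex_rcons w2 _ hX2 hY2).
by case=> e; [left; apply: game_inv_succ_same e | right; apply: game_inv_succ_next e].
Qed.

Lemma game_inv_atom a : bounded_atom V B m a -> all b (fo_fv a) ->
  sat (flat T1) (fun z => flat_vertex (X1 z)) a -> sat (flat T2) (fun z => flat_vertex (X2 z)) a.
Proof.
case: a => //= [x y|i x y|c x|i x|x|x y].
- by move=> /andP[xV yV] /and3P[bx bY _]; apply: game_inv_le.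
- by move=> /and3P[iB xV yV] /and3P[bx bY _]; apply: game_inv_succ.
- by move=> xV /andP[bx _]; apply: game_inv_lab.
- by move=> /andP[im xV] /andP[bx _]; apply: game_inv_var.
- by move=> xV /andP[bx _]; apply: game_inv_root.
- by move=> /andP[xV yV] /and3P[bx bY _]; apply: game_inv_eq.
Qed.

End Atoms.

Lemma game_inv_atoms_agree T1 T2 r b X1 X2 : wf_tree2 m T1 -> wf_tree2 m T2 ->
  labels_ef T1 T2 -> game_inv T1 T2 r b X1 X2 ->
  atoms_agree m b (flat T1) (fun z => flat_vertex (X1 z)) (flat T2) (fun z => flat_vertex (X2 z)).
Proof.
move=> w1 w2 hR hI a ha hb; split; first exact: game_inv_atom w1 w2 hR hI a ha hb.
exact: game_inv_atom w2 w1 (labels_ef_sym hR) (game_inv_sym hI) a ha hb.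
Qed.

Section Forth.
Variables (T1 T2 : rtree2 S) (r : nat) (b : nat -> bool) (X1 X2 : nat -> addr).
Variables (x : nat) (L : seq (seq nat)) (p : seq nat).
Hypotheses (w1 : wf_tree2 m T1) (w2 : wf_tree2 m T2) (hR : labels_ef T1 T2)
  (hI : game_inv T1 T2 r.+1 b X1 X2) (rQ : r < Q) (xV : x < V) (bx : b x = false)
  (hbV : forall y, b y -> y < V) (hX : flat_addr T1 (L, p)).

(* Spoiler places the new pebble [x] at [flat_vertex (L, p)] in [flat T1];
   Duplicator answers by descending along [L] one inner tree at a time. *)
Definition near j := fun y => [&& b y, j <= size (X1 y).1 & take j (X1 y).1 == take j L].

Definition synced j P' := [/\ var_path T2 [::] P', size P' = j,
  follow T1 [::] (take j L) = follow T2 [::] P' &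
  forall y, b y -> j <= size (X1 y).1 -> (take j (X1 y).1 = take j L <-> take j (X2 y).1 = P')].

Definition new_local j P' (q q' : seq nat) := forall k s1 s2,
  T1 (follow T1 [::] (take j L)) = Some (inl (k, s1)) ->
  T2 (follow T2 [::] P') = Some (inl (k, s2)) ->
  ef_equiv k r (add_var (near j) x) s1 (upd (local_pos X1 j) x q) s2 (upd (local_pos X2 j) x q').

(* When no pebble lies in the inner tree yet, [labels_ef] still makes it
   [Q]-round, hence [r.+1]-round, equivalent to its counterpart. *)
Lemma synced_local j P' : synced j P' -> forall k s1 s2,
  T1 (follow T1 [::] (take j L)) = Some (inl (k, s1)) ->
  T2 (follow T2 [::] P') = Some (inl (k, s2)) ->
  ef_equiv k r.+1 (near j) s1 (local_pos X1 j) s2 (local_pos X2 j).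
Proof.
case=> _ _ eo hc k s1 s2 e1 e2; case: hI => h1 h2 h3.
case: (classic (exists y, [/\ b y, j <= size (X1 y).1 & take j (X1 y).1 = take j L])).
  move=> [y [hby jy ty]]; have [_ hE] := h3 y hby j jy.
  have e1' : T1 (follow T1 [::] (take j (X1 y).1)) = Some (inl (k, s1)) by rewrite ty.
  have e2' : T2 (follow T2 [::] (take j (X2 y).1)) = Some (inl (k, s2)).
    by rewrite (proj1 (hc y hby jy) ty).
  apply: ef_equiv_sub (hE k s1 s2 e1' e2') _ => z /and3P[bz jz /eqP tz].
  by rewrite /same_tree bz jz tz ty eqxx.
move=> hn; have [s2' [e2' hE]] := labels_ef_letter hR e1.
move: e2' hE; rewrite eo e2 => -[<-] hE.
apply: ef_equiv_sub_ext (ef_equiv_le rQ hE) _ => z /and3P[bz jz /eqP tz].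
by case: hn; exists z.
Qed.

Lemma near_new_atom j q q' y : b y -> j < size (X1 y).1 -> take j (X1 y).1 = take j L ->
  forall k (s1 s2 : rtree S), ef_equiv k r (add_var (near j) x) s1 (upd (local_pos X1 j) x q)
                                                  s2 (upd (local_pos X2 j) x q') ->
  (nth [::] (X1 y).1 j = q <-> nth [::] (X2 y).1 j = q').
Proof.
move=> hby jy ty k s1 s2 /ef_equiv_atoms hat.
have sy := game_inv_size hI hby.
have yx : y != x by apply/eqP => e; rewrite e bx in hby.
have /= := hat (FEq S y x).
rewrite xV (hbV hby) /add_var eqxx (negbTE yx) /near hby (ltnW jy) ty eqxx.
rewrite !upd_same !upd_other // /local_pos => /(_ isT isT).
by rewrite !(set_nth_default [::]) // -sy.
Qed.

Lemma walk_step j P' : j < size L -> synced j P' ->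
  exists l', synced j.+1 (rcons P' l') /\ new_local j P' (nth [::] L j) l'.
Proof.
move=> jL hS; case: (hS) => hP sP eo hc; set l := nth [::] L j.
have tj : take j.+1 L = rcons (take j L) l by rewrite (take_nth [::] jL).
have := var_path_take j.+1 hX.1; rewrite tj -cats1 => /var_path_cat [_ /= [k [s1 [i [e1 hl hLr]]]]].
have [s2 [e2 _]] := labels_ef_letter hR e1; rewrite eo in e2.
have [_ /(_ x xV) [fw _]] := synced_local hS e1 e2.
have [l' _ hE] : exists2 l', s2 l' <> None & ef_equiv k r (add_var (near j) x) s1
    (upd (local_pos X1 j) x l) s2 (upd (local_pos X2 j) x l') by apply: fw; rewrite hl.
have ik : i < k := wf_var_lt (w1.2 _ _ _ e1) hl.
have hl' : s2 l' = Some (inr i).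
  have /= := ef_equiv_atoms hE (a := FQ S i x); rewrite xV ik /add_var eqxx => /(_ isT isT) [+ _].
  by rewrite !upd_same => /(_ hl).
have [[k1 s1c] ec1] := hLr; have [s2c [ec2 _]] := labels_ef_letter hR ec1; rewrite eo in ec2.
have [hP' fP'] := var_path_rcons hP e2 hl' (ex_intro _ _ ec2).
have [_ fL] := var_path_rcons (var_path_take j hX.1) e1 hl (ex_intro _ _ ec1).
exists l'; split; last first.
  by move=> k' s1' s2'; rewrite e1 e2 => -[<- <-] [<-].
split => //; first by rewrite size_rcons sP.
  by rewrite tj fL fP' eo.
move=> y hby jy; have sy := game_inv_size hI hby.
rewrite tj (take_nth [::] jy) (take_nth [::] (leq_trans jy (eq_leq sy))).
split=> /rcons_inj [ty ny].
- have ty2 := (hc y hby (ltnW jy)).1 ty; rewrite ty2.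
  by rewrite -((near_new_atom hby jy ty hE).1 ny).
- have ty1 := (hc y hby (ltnW jy)).2 ty; rewrite ty1.
  by rewrite ((near_new_atom hby jy ty1 hE).2 ny).
Qed.

Lemma walk_end P' : synced (size L) P' ->
  exists p', end_pos T2 (follow T2 [::] P') p' /\ new_local (size L) P' p p'.
Proof.
move=> hS; case: (hS) => _ _ eo _; have [k [s1 [e1 hp]]] := hX.2.
rewrite /= -[L in follow _ _ L](take_size L) in e1.
have [s2 [e2 _]] := labels_ef_letter hR e1; rewrite eo in e2.
have [_ /(_ x xV) [fw _]] := synced_local hS e1 e2.
have sp : s1 p <> None by case: hp => [[a ->]|[i [j [-> _]]]].
have [p' _ hE] := fw p sp; have hat := ef_equiv_atoms hE.
exists p'; split; last by move=> k' s1' s2'; rewrite e1 e2 => -[<- <-] [<-].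
exists k, s2; split => //; case: hp => [[a ha]|[i [j [hi hj]]]].
  left; exists a; have /= := hat (FLab a x); rewrite xV /add_var eqxx => /(_ isT isT) [+ _].
  by rewrite !upd_same => /(_ ha).
right; exists i, j; split.
  have ik : i < k := wf_var_lt (w1.2 _ _ _ e1) hi.
  have /= := hat (FQ S i x); rewrite xV ik /add_var eqxx => /(_ isT isT) [+ _].
  by rewrite !upd_same => /(_ hi).
by rewrite -eo take_size; apply: labels_ef_var hR hj.
Qed.

Lemma walk d : forall j P', j + d = size L -> synced j P' ->
  exists R p', [/\ end_pos T2 (follow T2 [::] (P' ++ R)) p', size R = d &
    forall i, j <= i <= size L -> synced i (take i (P' ++ R)) /\
      new_local i (take i (P' ++ R)) (nth p L i) (nth p' (P' ++ R) i)].
Proof.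
elim: d => [|d IH] j P' hjd hS.
  rewrite addn0 in hjd; subst j; case: (hS) => _ sP _ _.
  have [p' [hp' hE]] := walk_end hS.
  exists [::], p'; rewrite cats0; split => // i /andP[hi1 hi2].
  have -> : i = size L by apply/eqP; rewrite eqn_leq hi1 hi2.
  by rewrite take_oversize ?sP // !nth_default ?sP.
case: (hS) => _ sP _ _; have jL : j < size L by rewrite -hjd addnS ltnS leq_addr.
have [l' [hS' hE]] := walk_step jL hS.
have [R [p' [hp' sR hR']]] := IH j.+1 (rcons P' l') (etrans (addSnnS j d) hjd) hS'.
exists (l' :: R), p'; rewrite -cat_rcons; split => //=; first by rewrite sR.
move=> i /andP[ji iL]; case: (ltngtP j i) ji => // [ji _|<- _]; first by apply: hR'; rewrite ji.
rewrite -cats1 -catA !take_size_cat // nth_cat sP ltnn subnn /=.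
by split => //; rewrite (set_nth_default [::]).
Qed.

Section NewInvariant.
Variables (R : seq (seq nat)) (p' : seq nat).
Hypotheses (hX' : flat_addr T2 (R, p')) (sR : size R = size L)
  (hW : forall i, i <= size L -> synced i (take i R) /\
          new_local i (take i R) (nth p L i) (nth p' R i)).

Local Notation X1' := (upd X1 x (L, p)).
Local Notation X2' := (upd X2 x (R, p')).

Lemma local_pos_upd X A j : local_pos (upd X x A) j =1 upd (local_pos X j) x (nth A.2 A.1 j).
Proof. by move=> y; rewrite /local_pos /upd; case: eqP. Qed.

Lemma same_tree_new z j : j <= size L -> take j (X1' z).1 = take j L ->
  same_tree (add_var b x) X1' z j =1 add_var (near j) x.
Proof.
move=> jL tz y; rewrite /same_tree /add_var /near tz /upd.
by case: eqP => [->|_] //=; rewrite jL eqxx.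
Qed.

Lemma new_local_in_tree z j : j <= size L -> take j (X1' z).1 = take j L ->
  forall k s1 s2, T1 (follow T1 [::] (take j L)) = Some (inl (k, s1)) ->
  T2 (follow T2 [::] (take j R)) = Some (inl (k, s2)) ->
  ef_equiv k r (same_tree (add_var b x) X1' z j) s1 (local_pos X1' j) s2 (local_pos X2' j).
Proof.
move=> jL tz k s1 s2 e1 e2; have [_ hE] := hW jL.
by apply: ef_equiv_sub_ext (hE k s1 s2 e1 e2) _ => y; rewrite same_tree_new // !local_pos_upd.
Qed.

Lemma new_share y j : b y -> j <= size L -> j <= size (X1 y).1 ->
  (take j (X1 y).1 = take j L <-> take j (X2 y).1 = take j R).
Proof. by move=> hy jL jy; have [[_ _ _ hc] _] := hW jL; apply: hc. Qed.

Lemma new_local_outside z j : b z -> j <= size (X1 z).1 ->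
  ~ (j <= size L /\ take j (X1 z).1 = take j L) ->
  forall k s1 s2, T1 (follow T1 [::] (take j (X1 z).1)) = Some (inl (k, s1)) ->
  T2 (follow T2 [::] (take j (X2 z).1)) = Some (inl (k, s2)) ->
  ef_equiv k r (same_tree (add_var b x) X1' z j) s1 (local_pos X1' j) s2 (local_pos X2' j).
Proof.
case: hI => _ _ h3 hz jz hn k s1 s2 e1 e2; have [_ hE] := h3 z hz j jz.
apply: ef_equiv_sub_ext (ef_equiv_le (leqnSn r) (hE k s1 s2 e1 e2)) _ => y.
have zx : z != x by apply/eqP => e; rewrite e bx in hz.
rewrite /same_tree /add_var !local_pos_upd /upd (negbTE zx).
case: eqP => [->|yx] /=; last by move=> ->.
by case/andP=> jL /eqP tL; case: hn.
Qed.

Lemma new_game_inv : game_inv T1 T2 r (add_var b x) X1' X2'.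
Proof.
case: hI => h1 h2 h3; split.
- move=> z; rewrite /add_var /upd; case: eqP => [_|_] /= hz; last exact: h1.
  by split => //; rewrite sR.
- move=> z1 z2; rewrite /add_var /upd.
  case: (eqVneq z1 x) => [_|n1]; case: (eqVneq z2 x) => [_|n2] //= hz1 hz2 j j1 j2.
  + by split=> /esym /(new_share hz2 j1 j2) /esym.
  + exact: new_share.
  + exact: h2.
- have eX1 : X1' x = (L, p) :> addr by rewrite upd_same.
  have eX2 : X2' x = (R, p') :> addr by rewrite upd_same.
  move=> z hz j jz; case: (eqVneq z x) => [ez|zx].
    subst z; have jL : j <= size L by move: jz; rewrite eX1.
    have [[_ _ eo _] _] := hW jL; rewrite eX1 eX2; split => //.
    by apply: new_local_in_tree; rewrite ?eX1.
  have eX1z : X1' z = X1 z by rewrite upd_other.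
  have eX2z : X2' z = X2 z by rewrite upd_other.
  move: hz jz; rewrite /add_var eX1z eX2z (negbTE zx) /= => hz jz.
  have [eo hE] := h3 z hz j jz; split => // k s1 s2.
  case: (classic (j <= size L /\ take j (X1 z).1 = take j L)) => [[jL tz]|hn].
    by rewrite tz (new_share hz jL jz).1 //; apply: new_local_in_tree; rewrite ?eX1z.
  exact: new_local_outside.
Qed.

End NewInvariant.

Lemma forth_answer : exists R p',
  flat_addr T2 (R, p') /\ game_inv T1 T2 r (add_var b x) (upd X1 x (L, p)) (upd X2 x (R, p')).
Proof.
have hS0 : synced 0 [::].
  split; rewrite ?take0 //; first by have [a h] := wf_root w2.1; exists a.
  by move=> y _ _; rewrite !take0.
have [R [p' [hp' sR hW]]] := walk (add0n _) hS0.
have [[hR' _ _ _] _] := hW (size L) (leqnn _).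
rewrite take_oversize ?sR // in hR'.
by exists R, p'; split; [|apply: new_game_inv => // i iL; apply: hW].
Qed.

End Forth.

Lemma game_inv_forth T1 T2 r b X1 X2 x w : wf_tree2 m T1 -> wf_tree2 m T2 ->
  labels_ef T1 T2 -> r < Q -> (forall z, b z -> z < V) -> game_inv T1 T2 r.+1 b X1 X2 ->
  x < V -> flat T1 w <> None ->
  exists A A', [/\ flat_vertex A = w, flat T2 (flat_vertex A') <> None &
    game_inv T1 T2 r (add_var b x) (upd X1 x A) (upd X2 x A')].
Proof.
move=> w1 w2 hR rQ hbV hI xV hw.
pose b0 z := b z && (z != x).
have hI0 : game_inv T1 T2 r.+1 b0 X1 X2 by apply: game_inv_sub hI _ => z /andP[].
have bx0 : b0 x = false by rewrite /b0 eqxx andbF.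
have hbV0 y : b0 y -> y < V by move=> /andP[/hbV].
have [[L p] hX ->] := flat_addr_complete w1 hw.
have [R [p' [hX' hI']]] := forth_answer w1 w2 hR hI0 rQ xV bx0 hbV0 hX.
exists (L, p), (R, p'); split => //; first by have [-> ?] := flat_addr_label w2 hX'.
apply: game_inv_sub hI' _ => z; rewrite /add_var /b0.
by case: eqP => //= /eqP zx ->.
Qed.

Lemma game_inv_ef_equiv r : r <= Q -> forall T1 T2 b X1 X2,
  wf_tree2 m T1 -> wf_tree2 m T2 -> labels_ef T1 T2 -> (forall z, b z -> z < V) ->
  game_inv T1 T2 r b X1 X2 ->
  ef_equiv m r b (flat T1) (fun z => flat_vertex (X1 z)) (flat T2) (fun z => flat_vertex (X2 z)).
Proof.
elim: r => [|r IH] rQ T1 T2 b X1 X2 w1 w2 hR hbV hI.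
  by split => //; apply: game_inv_atoms_agree hI.
split; first exact: game_inv_atoms_agree hI.
move=> x xV; have hbx z : add_var b x z -> z < V.
  by rewrite /add_var; case: eqP => [->|_] //= /hbV.
have upd_flat X A z :
    flat_vertex (upd X x A z) = upd (fun z => flat_vertex (X z)) x (flat_vertex A) z.
  by rewrite /upd; case: eqP.
split.
- move=> w hw; have [A [A' [<- hw' hI']]] := game_inv_forth w1 w2 hR rQ hbV hI xV hw.
  exists (flat_vertex A') => //.
  by apply: ef_equiv_ext (IH (ltnW rQ) _ _ _ _ _ w1 w2 hR hbx hI') _ _ => z _; apply: upd_flat.
- move=> w' hw'.
  have [A' [A [<- hw hI']]] :=
    game_inv_forth w2 w1 (labels_ef_sym hR) rQ hbV (game_inv_sym hI) xV hw'.
  exists (flat_vertex A) => //.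
  have := IH (ltnW rQ) _ _ _ _ _ w1 w2 hR hbx (game_inv_sym hI').
  by move/ef_equiv_ext; apply=> z _; apply: upd_flat.
Qed.

End Composition.

(** * Compositionality *)

Section Bounded.
Variables (S : alphabet) (V B Q : nat).
Hypotheses (V_gt0 : 0 < V) (Q_gt0 : 0 < Q).

Definition FO_bounded n (f : fo S) := [/\ FO n f, qrank f <= Q & bounded V B f].

Local Notation type0 n t := (type_of V B n Q xpred0 t asg0).

Lemma FO_bounded_type n f t t' :
  FO_bounded n f -> type0 n t = type0 n t' -> holds t f -> holds t' f.
Proof.
case=> -[fv so] hq hg /type_of_ef_equiv he.
have hall : all xpred0 (fo_fv f) by rewrite fv.
by have [] := ef_equiv_sat hg so hq hall he.
Qed.

Lemma admissible_FO_bounded n f : admissible V B n xpred0 f -> qrank f <= Q -> FO_bounded n f.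
Proof. by case/and3P=> hg hs hfv hq; do 2!split => //; case: (fo_fv f) hfv. Qed.

Lemma hintikka_FO_bounded n (i : rank_type S V B n Q) : FO_bounded n (hintikka xpred0 i).
Proof.
apply: admissible_FO_bounded; first exact: hintikka_admissible.
by apply: hintikka_qrank; left.
Qed.

Definition model_types n f : {set rank_type S V B n Q} :=
  [set i | classicb (exists t, type0 n t = i /\ holds t f)].

Definition types_disj n (P : {set rank_type S V B n Q}) : fo S :=
  fbigor [seq hintikka xpred0 i | i <- enum P].

Lemma holds_model_types n f t : FO_bounded n f ->
  holds t f <-> holds t (types_disj (model_types n f)).
Proof.
move=> hf; rewrite /holds sat_fbigor; split.
- move=> ht; exists (hintikka xpred0 (type0 n t)); last exact/sat_hintikka.
  apply/In_map; exists (type0 n t) => //; apply/InE.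
  by rewrite mem_enum inE; apply/classicbP; exists t.
- case=> g /In_map [i /InE]; rewrite mem_enum inE => /classicbP [t0 [<- h0]] -> /sat_hintikka.
  by move=> e; apply: FO_bounded_type hf (esym e) h0.
Qed.

Lemma FO_bounded_finite n : exists l : seq (fo S), forall f, FO_bounded n f ->
  exists2 g, List.In g l & forall t, holds t f <-> holds t g.
Proof.
exists [seq types_disj P | P <- enum {set rank_type S V B n Q}] => f hf.
exists (types_disj (model_types n f)); last by move=> t; apply: holds_model_types.
by apply/In_map; exists (model_types n f) => //; apply/InE; rewrite mem_enum.
Qed.

Lemma sqle_FO_bounded k s s' :
  sqle (FO_bounded k) s s' -> ef_equiv V B k Q xpred0 s asg0 s' asg0.
Proof.
move=> hs; apply: type_of_ef_equiv; apply/esym/sat_hintikka.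
by apply: hs; [exact: hintikka_FO_bounded | exact/sat_hintikka].
Qed.

Lemma FO_bounded_congruence lin : congruence_ordering lin FO_bounded.
Proof.
move=> m T1 T2 [w1 [_ i1]] [w2 [_ i2]] hl f hf.
have wT1 : wf_tree2 m T1 by split => // w k s /i1 [].
have wT2 : wf_tree2 m T2 by split => // w k s /i2 [].
have hR : labels_ef V B Q T1 T2.
  move=> u; move: (hl u); case: (T1 u) => [[[k s]|i]|]; case: (T2 u) => [[[k' s']|j]|] //.
  by move=> [<- hs]; split => //; apply: sqle_FO_bounded.
pose X0 := fun _ : nat => (([::] : seq (seq nat)), ([::] : seq nat)).
have hI : game_inv V B T1 T2 Q xpred0 X0 X0 by split.
have hb0 z : xpred0 z -> z < V by [].
have hE := game_inv_ef_equiv (leqnn Q) wT1 wT2 hR hb0 hI.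
have hE' : ef_equiv V B m Q xpred0 (flat T1) asg0 (flat T2) asg0 by apply: ef_equiv_ext hE _ _.
case: hf => -[fv so] hq hg; have hall : all xpred0 (fo_fv f) by rewrite fv.
by have [] := ef_equiv_sat hg so hq hall hE'.
Qed.

End Bounded.

Section SyntacticBounds.
Variable S : alphabet.

Fixpoint var_bound (f : fo S) : nat :=
  match f with
  | FLe x y | FEq x y | FSucc _ x y => maxn x.+1 y.+1
  | FLab _ x | FQ _ x | FRoot x => x.+1
  | FNot g => var_bound g
  | FAnd g h => maxn (var_bound g) (var_bound h)
  | FEx x g => maxn x.+1 (var_bound g)
  end.

Fixpoint succ_bound (f : fo S) : nat :=
  match f with
  | FSucc i _ _ => i.+1
  | FNot g | FEx _ g => succ_bound g
  | FAnd g h => maxn (succ_bound g) (succ_bound h)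
  | _ => 0
  end.

Lemma bounded_le V B f : var_bound f <= V -> succ_bound f <= B -> bounded V B f.
Proof.
elim: f => //= [x y|i x y|x y|g IHg h IHh|x g IH]; rewrite ?geq_max.
- by case/andP=> -> ->.
- by case/andP=> -> -> ->.
- by case/andP=> -> ->.
- by case/andP=> hg hh /andP[sg sh]; rewrite IHg ?IHh.
- by case/andP=> -> hg sg; rewrite IH.
Qed.

End SyntacticBounds.

Lemma In_le_bigmax (T : Type) (g : T -> nat) l y : List.In y l -> g y <= \max_(z <- l) g z.
Proof.
elim: l => [|z l IH] //= [->|/IH h]; rewrite big_cons; first exact: leq_maxl.
exact: leq_trans h (leq_maxr _ _).
Qed.

Lemma FO_is_compositional lin : FO_compositional lin.
Proof.
move=> Phi hfin hFO.
pose lS (S : alphabet) := proj1_sig (constructive_indefinite_description _ (hfin S)).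
have hlS S n f : Phi S n f -> List.In (n, f) (lS S).
  by rewrite /lS; case: constructive_indefinite_description => l hl; apply: hl.
pose bound (S : alphabet) (g : fo S -> nat) := \max_(nf <- lS S) g nf.2.
pose V (S : alphabet) := (bound S (@var_bound S)).+1.
pose Q (S : alphabet) := (bound S (@qrank S)).+1.
exists (fun S => FO_bounded (V S) (bound S (@succ_bound S)) (Q S)); split.
- move=> S n f hf; have le_bound g : g f <= bound S g := In_le_bigmax (g \o snd) (hlS _ _ _ hf).
  split; [exact: hFO hf | exact: leqW (le_bound _) | apply: bounded_le => //].
  exact: leqW (le_bound _).
- by move=> S n f [].
- move=> S n; have [l hl] := FO_bounded_finite S (V S) (bound S (@succ_bound S)) (Q S) n.
  by exists l => f /hl [g hg e]; exists g => // t _; apply: e.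
- by move=> S; apply: FO_bounded_congruence.
Qed.

Theorem theorem10p5 : FO_compositional false /\ FO_compositional true.
Proof. by split; apply: FO_is_compositional. Qed.
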